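(* Let $n\geqslant 4$ and let $S$ be an independent set of vertices of the split-star $S_n^2$. (1) If $|S|=2$, then $|N(S)|\geqslant 4n-8$. (2) If $|S|=3$, then $|N(S)|\geqslant 6n-14$. (3) If $|S|=4$, then $|N(S)|\geqslant 8n-20$.
   Context: For $n\geqslant 3$, permutations $p=p_1\cdots p_n$ of $\{1,\dots,n\}$ are written as words; $\mathcal S_n$ is the set of all permutations. $p\,\mathrm{g}_{12}$ swaps the symbols at positions $1$ and $2$. For $3\leqslant i\leqslant n$, $p\,\mathrm{g}_i^+$ is obtained from $p$ by placing $p_i,p_1,p_2$ at positions $1,2,i$ respectively (others unchanged), and $p\,\mathrm{g}_i^-$ by placing $p_2,p_i,p_1$ at positions $1,2,i$. The split-star $S_n^2$ has vertex set $\mathcal S_n$, with $p,q$ adjacent iff $q=p\mathrm{g}_{12}$ or $q\in\{p\mathrm{g}_i^+,p\mathrm{g}_i^-\}$ for some $i\in\{3,\dots,n\}$. For a vertex set $S$, $N(S)$ is the set of vertices not in $S$ adjacent to at least one vertex of $S$. *)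

From mathcomp Require Import all_boot all_fingroup.
Set Implicit Arguments. Unset Strict Implicit. Unset Printing Implicit Defensive.

(* A permutation p of {1,..,n} is modelled as p : {perm 'I_n}; its word is
   p_1 ... p_n where (0-indexed) position k holds symbol p k.  Symbols and
   positions are shifted by -1 (0..n-1 instead of 1..n). *)
Definition word (n : nat) (p : {perm 'I_n}) : seq nat :=
  [seq val (p i) | i <- enum 'I_n].

(* p g12 : swap the symbols at positions 1 and 2 (0-indexed 0 and 1). *)
Definition g12 (s : seq nat) : seq nat :=
  mkseq (fun k => nth 0 s (if k == 0 then 1 else if k == 1 then 0 else k)) (size s).

(* p g_i^+ : put p_i, p_1, p_2 at positions 1, 2, i  (0-indexed: i, 0, 1 at 0, 1, i). *)
Definition gplus (i : nat) (s : seq nat) : seq nat :=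
  mkseq (fun k => nth 0 s (if k == 0 then i else if k == 1 then 0
                           else if k == i then 1 else k)) (size s).

(* p g_i^- : put p_2, p_i, p_1 at positions 1, 2, i  (0-indexed: 1, i, 0 at 0, 1, i). *)
Definition gminus (i : nat) (s : seq nat) : seq nat :=
  mkseq (fun k => nth 0 s (if k == 0 then 1 else if k == 1 then i
                           else if k == i then 0 else k)) (size s).

Definition splitstar_adj (n : nat) (p q : {perm 'I_n}) : bool :=
  (word q == g12 (word p)) ||
  [exists i : 'I_n, (2 <= val i) &&
     ((word q == gplus (val i) (word p)) || (word q == gminus (val i) (word p)))].

Definition independent (n : nat) (S : {set {perm 'I_n}}) : bool :=
  [forall p in S, forall q in S, ~~ splitstar_adj p q].

Definition nbhd (n : nat) (S : {set {perm 'I_n}}) : {set {perm 'I_n}} :=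
  [set q | (q \notin S) && [exists p in S, splitstar_adj p q]].

From mathcomp Require Import all_boot all_fingroup zify.
Set Implicit Arguments. Unset Strict Implicit. Unset Printing Implicit Defensive.

(** Call positions 1 and 2 the centres, and let [star] consist of the identity and the
    transpositions (c i) of a centre c with a position i >= 3.  Then q is
    adjacent to p exactly when q p^-1 lies in g12 * star, so N(p) is the translate by g12 of
    the ball star * p, which has 2n - 3 elements, and neighbourhoods intersect like balls.
    The balls around u and v share as many points as d = v u^-1 has factorisations s' s with
    s, s' in star.  For distinct non-adjacent u, v the factor s must be the transposition of
    a centre c with d^-1 c, so there are at most two factorisations, and two only if d is an
    involution.  A product of two elements of star moves at most two positions >= 3, and if it
    moves two it maps no centre to the other one; comparing two such involutions shows that
    three independent vertices whose pairwise counts add up to at least 5 have a common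
    neighbour.  No vertex is adjacent to four vertices pairwise sharing two neighbours: the
    corresponding elements of star would move pairwise different sets of centres, and there
    are only three such sets.  Inclusion-exclusion over two, three and four balls concludes. *)

(** * Counting *)

Lemma cardsUI3 (T : finType) (A B C : {set T}) :
  #|A :|: B :|: C| + (#|A :&: B| + #|A :&: C| + #|B :&: C|) =
  #|A| + #|B| + #|C| + #|A :&: B :&: C|.
Proof.
have := cardsUI (A :|: B) C; have := cardsUI A B.
have := cardsUI (A :&: C) (B :&: C); rewrite setIACA setIid -setIUl; lia.
Qed.

Lemma cardsUI4 (T : finType) (A B C D : {set T}) :
  #|A :|: B :|: C :|: D| +
    (#|A :&: B| + #|A :&: C| + #|A :&: D| + #|B :&: C| + #|B :&: D| + #|C :&: D|) +
    #|A :&: B :&: C :&: D| =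
  #|A| + #|B| + #|C| + #|D| +
    (#|A :&: B :&: C| + #|A :&: B :&: D| + #|A :&: C :&: D| + #|B :&: C :&: D|).
Proof.
have := cardsUI (A :|: B :|: C) D; have := cardsUI3 A B C.
have := cardsUI3 (A :&: D) (B :&: D) (C :&: D).
have IdD X Y : X :&: D :&: (Y :&: D) = X :&: Y :&: D by rewrite setIACA setIid.
rewrite -!setIUl !IdD; lia.
Qed.

Lemma sum3_gt4_cases a b c : a <= 2 -> b <= 2 -> c <= 2 -> 4 < a + b + c ->
  [|| [&& 1 < a, 1 < b & 0 < c], [&& 1 < a, 0 < b & 1 < c] | [&& 0 < a, 1 < b & 1 < c]].
Proof. lia. Qed.

(* With q = 0, the four triangle sums add up to twice the pair sum and each one above 4 gives
   a positive triple; with q > 0 some pair is at most 1 while every triple is at least q. *)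
Lemma union4_count (U q ka kb kc kd cab cac cad cbc cbd ccd tabc tabd tacd tbcd : nat) :
  U + (cab + cac + cad + cbc + cbd + ccd) + q = ka + kb + kc + kd + (tabc + tabd + tacd + tbcd) ->
  cab <= 2 -> cac <= 2 -> cad <= 2 -> cbc <= 2 -> cbd <= 2 -> ccd <= 2 ->
  (4 < cab + cac + cbc -> 0 < tabc) -> (4 < cab + cad + cbd -> 0 < tabd) ->
  (4 < cac + cad + ccd -> 0 < tacd) -> (4 < cbc + cbd + ccd -> 0 < tbcd) ->
  q <= tabc -> q <= tabd -> q <= tacd -> q <= tbcd ->
  (0 < q -> ~~ [&& 1 < cab, 1 < cac, 1 < cad, 1 < cbc, 1 < cbd & 1 < ccd]) ->
  ka + kb + kc + kd - 8 <= U.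
Proof. lia. Qed.

Lemma card_setI4_le (T : finType) (A B C D : {set T}) :
  [/\ #|A :&: B :&: C :&: D| <= #|A :&: B :&: C|, #|A :&: B :&: C :&: D| <= #|A :&: B :&: D|,
      #|A :&: B :&: C :&: D| <= #|A :&: C :&: D| & #|A :&: B :&: C :&: D| <= #|B :&: C :&: D|].
Proof.
by split; apply/subset_leq_card/subsetP => x /setIP[/setIP[/setIP[xA xB] xC] xD];
  rewrite !inE ?xA ?xB ?xC ?xD.
Qed.

Lemma card3_set (T : finType) (A : {set T}) : #|A| = 3 ->
  exists a b c, [/\ a != b, a != c, b != c & A = [set a; b; c]].
Proof.
move=> A3; have [a aA] : exists a, a \in A by apply/card_gt0P; rewrite A3.
have /eqP/cards2P[b [c [bc Da]]] : #|A :\ a| = 2 by move: A3; rewrite (cardsD1 a) aA => -[].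
have : b \in A :\ a /\ c \in A :\ a by rewrite Da !inE !eqxx orbT.
rewrite !inE => -[/andP[ba _] /andP[ca _]].
exists a, b, c; split; [by rewrite eq_sym | by rewrite eq_sym | done |].
by rewrite -setUA -Da setD1K.
Qed.

Lemma card4_set (T : finType) (A : {set T}) : #|A| = 4 ->
  exists a b c d, [/\ [&& a != b, a != c & a != d], [&& b != c, b != d & c != d]
                    & A = [set a; b; c; d]].
Proof.
move=> A4; have [a aA] : exists a, a \in A by apply/card_gt0P; rewrite A4.
have [b [c [d [bc bd cd Da]]]] : exists b c d, [/\ b != c, b != d, c != d & A :\ a = [set b; c; d]].
  by apply: card3_set; move: A4; rewrite (cardsD1 a) aA => -[].
have : [/\ b \in A :\ a, c \in A :\ a & d \in A :\ a] by rewrite Da !inE !eqxx !orbT.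
rewrite !inE => -[/andP[ba _] /andP[ca _] /andP[da _]].
exists a, b, c, d; rewrite bc bd cd ![a == _]eq_sym ba ca da; split=> //.
have -> : [set a; b; c; d] = a |: [set b; c; d] by rewrite !setUA.
by rewrite -Da setD1K.
Qed.

(** * Intersections of right translates *)

Section RcosetIntersections.
Local Open Scope group_scope.
Variables (gT : finGroupType) (T : {set gT}).
Implicit Types (d u v w x : gT) (S : {set gT}).

Definition common d : {set gT} := T :&: T :* d.

Lemma mulgV_shift w u v : (w * u^-1) * (v * u^-1)^-1 = w * v^-1.
Proof. by rewrite invMg invgK mulgA mulgKV. Qed.

Lemma rcosetI_common u v : T :* u :&: T :* v = common (v * u^-1) :* u.
Proof. by apply/setP => w; rewrite /common !inE !mem_rcoset !inE mem_rcoset mulgV_shift. Qed.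

Lemma card_rcosetI u v : #|T :* u :&: T :* v| = #|common (v * u^-1)|.
Proof. by rewrite rcosetI_common card_rcoset. Qed.

Lemma card_rcosetI3 u v x :
  #|T :* u :&: T :* v :&: T :* x| = #|common (v * u^-1) :&: common (x * u^-1)|.
Proof.
rewrite -(card_rcoset _ u); apply: eq_card => w.
by rewrite /common mem_rcoset !inE !mem_rcoset !mulgV_shift andbACA andbb andbA.
Qed.

Hypothesis T_inv : {in T, forall g, g^-1 \in T}.

Lemma mem_rcoset_sym w u : (w \in T :* u) = (u \in T :* w).
Proof.
by rewrite !mem_rcoset; apply/idP/idP => /T_inv; rewrite invMg invgK.
Qed.

Lemma card_common_clique k w S :
  (forall A : {set gT}, A \subset T ->
     {in A &, forall x y, x != y -> 1 < #|common (y * x^-1)|} -> #|A| <= k) ->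
  {in S &, forall x y, x != y -> 1 < #|T :* x :&: T :* y|} ->
  {in S, forall x, w \in T :* x} -> #|S| <= k.
Proof.
move=> clique_le pairS nbr_w; rewrite -(card_rcoset S w^-1); apply: clique_le.
  apply/subsetP => _ /rcosetP[x xS ->]; rewrite -mem_rcoset mem_rcoset_sym.
  exact: nbr_w.
move=> _ _ /rcosetP[x xS ->] /rcosetP[y yS ->] neq_xy.
rewrite mulgV_shift -card_rcosetI pairS //.
by apply: contraNneq neq_xy => ->.
Qed.

End RcosetIntersections.

Section Transpositions.
Local Open Scope group_scope.
Variable T : finType.
Implicit Types x y z w : T.

Lemma tperm_shared x y z :
  x != y -> x != z -> y != z -> tperm y z * tperm x z = tperm x y * tperm y z.
Proof.
move=> xy xz yz; have <- : tperm x z ^ tperm y z = tperm x y.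
  by rewrite tpermJ tpermR tpermD // eq_sym.
by rewrite /conjg tpermV !mulgA -[RHS]mulgA tperm2 mulg1.
Qed.

Lemma tperm_commute x y z w :
  tperm z w x = x -> tperm z w y = y -> commute (tperm x y) (tperm z w).
Proof. by move=> zwx zwy; apply/commgP/conjg_fixP; rewrite tpermJ zwx zwy. Qed.

End Transpositions.

Section Star.
Local Open Scope group_scope.
Variable m : nat.
Local Notation n := m.+2.
Local Notation P := {perm 'I_n}.
Implicit Types (c i r z p q : 'I_n) (d g s u v w x : P) (A S : {set P}).

Definition pos0 : 'I_n := ord0.

Definition pos1 : 'I_n := @Ordinal n 1 isT.

Definition perm_g12 : P := tperm pos0 pos1.

Definition outer : {set 'I_n} := [set r : 'I_n | 1 < r].

Definition star : {set P} :=
  1 |: ([set tperm pos0 r | r in outer] :|: [set tperm pos1 r | r in outer]).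

(* As left multipliers, g12, g_i^+ and g_i^- are g12, g12 * (2 i) and g12 * (1 i). *)
Definition gens : {set P} := perm_g12 *: star.

Lemma centre_neq_outer c r : c <= 1 -> 1 < r -> c != r.
Proof. by move=> c1; apply: contraTneq => cr; rewrite -leqNgt -cr. Qed.

Local Ltac neq := solve [ done | by rewrite eq_sym
                  | by apply: centre_neq_outer | by rewrite eq_sym; apply: centre_neq_outer ].

Lemma centreP c : c <= 1 -> c = pos0 \/ c = pos1.
Proof. by case: c => [[|[|c]] ?] // _; [left | right]; apply: val_inj. Qed.

Lemma outer_of_neq z : z != pos0 -> z != pos1 -> 1 < z.
Proof. by case: z => [[|[|z]] ?]. Qed.

Lemma tperm_centres c c' : c <= 1 -> c' <= 1 -> c != c' -> tperm c c' = perm_g12.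
Proof. by move=> /centreP[]-> /centreP[]->; rewrite ?eqxx // tpermC. Qed.

Variant star_spec : P -> Prop :=
  | StarId : star_spec 1
  | StarTperm c r of c <= 1 & 1 < r : star_spec (tperm c r).

Lemma starP s : s \in star -> star_spec s.
Proof.
rewrite !inE => /or3P[/eqP-> | /imsetP[r] | /imsetP[r]]; first exact: StarId.
  by rewrite inE => r1 ->; constructor.
by rewrite inE => r1 ->; constructor.
Qed.

Lemma mem_star c r : c <= 1 -> 1 < r -> tperm c r \in star.
Proof.
move=> /centreP[]-> r1; rewrite !inE; apply/or3P; [constructor 2 | constructor 3];
  by apply/imsetP; exists r; rewrite ?inE.
Qed.

Lemma star_inv s : s \in star -> s^-1 = s.
Proof. by case/starP=> [|c r _ _]; rewrite ?invg1 ?tpermV. Qed.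

Lemma star_invE s : (s^-1 \in star) = (s \in star).
Proof.
by apply/idP/idP => sS; [rewrite -[s]invgK star_inv | rewrite star_inv].
Qed.

Lemma star_moved s z : s \in star -> 1 < z -> s z != z -> s z <= 1 /\ s = tperm (s z) z.
Proof.
case/starP=> [|c r c1 r1 z1]; first by rewrite perm1 eqxx.
have [<- _|rz] := eqVneq r z; first by rewrite tpermR.
by rewrite tpermD ?eqxx //; neq.
Qed.

Lemma star_moved_uniq s p q :
  s \in star -> 1 < p -> 1 < q -> s p != p -> s q != q -> p = q.
Proof.
move=> sS p1 q1 sp sq; have [sp1 sE] := star_moved sS p1 sp.
by apply/eqP; apply: contraNT sq => pq; rewrite {1}sE tpermD //; neq.
Qed.

Lemma star_centre s c c' : s \in star -> c <= 1 -> c' <= 1 -> c != c' -> s c != c'.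
Proof.
case/starP=> [|c0 r c01 r1] c1 c'1 cc'; rewrite ?perm1 //.
case: tpermP => [_ | cr | _ _] //; first by neq.
by move: (centre_neq_outer c1 r1); rewrite cr eqxx.
Qed.

Lemma star_tperm_neq c c' z : tperm c z \in star -> c <= 1 -> c' <= 1 -> c != c' ->
  z != c'.
Proof.
move=> czS c1 c'1 cc'; have c'c : c' != c by rewrite eq_sym.
by apply: contraTneq (star_centre czS c'1 c1 c'c) => ->; rewrite tpermR eqxx.
Qed.

Lemma star_centre_image s c z :
  s \in star -> c <= 1 -> 1 < z -> s z != z -> s c = c \/ s c = z.
Proof.
move=> sS c1 z1 sz; have [sz1 ->] := star_moved sS z1 sz.
case: tpermP => [_ | cz | _ _]; [by right | | by left].
by move: (centre_neq_outer c1 z1); rewrite cz eqxx.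
Qed.

Lemma star_fixes_centre s : s \in star -> exists2 c : 'I_n, c <= 1 & s c = c.
Proof.
case/starP=> [|c r /centreP[]-> r1]; first by exists pos0; rewrite ?perm1.
  by exists pos1; rewrite // tpermD //; neq.
by exists pos0; rewrite // tpermD //; neq.
Qed.

Lemma card_outer : #|outer| = m.
Proof.
have := cardsC outer; rewrite card_ord.
have -> : ~: outer = [set pos0; pos1] by apply/setP => -[[|[|r]] rn]; rewrite !inE.
by rewrite cards2 (_ : pos0 != pos1) //; lia.
Qed.

Lemma card_star : #|star| = (2 * m).+1.
Proof.
have cardA c : c <= 1 -> #|[set tperm c r | r in outer]| = m.
  move=> c1; rewrite card_in_imset ?card_outer // => r r' _ _.
  by move/(congr1 (fun s : P => s c)); rewrite !tpermL.
rewrite /star; set A0 := [set _ | _ in _]; set A1 := [set _ | _ in _].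
have dis : A0 :&: A1 = set0.
  apply/setP => s; rewrite !inE.
  apply/andP => -[/imsetP[r] /[!inE] r1 -> /imsetP[r'] /[!inE] r'1].
  move/(congr1 (fun s : P => s pos0)); rewrite tpermL tpermD; [|neq|neq].
  by move=> rE; move: r1; rewrite rE.
have N1 : 1 \notin A0 :|: A1.
  apply/negP; rewrite inE => /orP[] /imsetP[r] /[!inE] r1 /(congr1 (fun s : P => s r));
    by rewrite perm1 tpermR => rE; move: r1; rewrite rE.
rewrite cardsU1 N1; have := cardsUI A0 A1.
by rewrite dis cards0 addn0 !cardA // => ->; lia.
Qed.

Lemma mem_gens s : s \in star -> perm_g12 * s \in gens.
Proof. by rewrite mem_lcoset mulKg. Qed.

Lemma gens_moves_centre g c : g \in gens -> c <= 1 -> g c != c.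
Proof.
case/lcosetP=> s sS -> /centreP[]->; rewrite permM /perm_g12 ?tpermL ?tpermR;
  exact: star_centre.
Qed.

(** * The split-star graph as a Cayley graph *)

Lemma nth_word u (k : 'I_n) : nth 0 (word u) k = u k.
Proof. by rewrite /word (nth_map k) ?size_enum_ord ?ltn_ord // nth_ord_enum. Qed.

Lemma size_word u : size (word u) = n.
Proof. by rewrite size_map size_enum_ord. Qed.

Lemma word_mkseqE u v g (F : nat -> nat) : (forall k : 'I_n, F k = g k) ->
  (word v == mkseq (fun k => nth 0 (word u) (F k)) (size (word u))) = (v == g * u).
Proof.
move=> FE; apply/eqP/eqP => [vE | ->].
  apply/permP => k; apply: val_inj.
  by have := congr1 (nth 0 ^~ k) vE; rewrite nth_mkseq ?size_word // FE !nth_word permM.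
apply: (@eq_from_nth _ 0); first by rewrite size_mkseq !size_word.
move=> k; rewrite size_word => kn.
by rewrite nth_mkseq ?size_word // -[k]/(nat_of_ord (Ordinal kn)) FE !nth_word permM.
Qed.

Lemma perm_g12E (k : 'I_n) :
  (if k == 0 :> nat then 1 else if k == 1 :> nat then 0 else k)%N = perm_g12 k :> nat.
Proof. by rewrite permE; case: k => [[|[|k]] kn]. Qed.

Lemma perm_gplusE i (k : 'I_n) : 1 < i ->
  (if k == 0 :> nat then i : nat else if k == 1 :> nat then 0
   else if k == i :> nat then 1 else k)%N = (perm_g12 * tperm pos1 i) k :> nat.
Proof.
move=> i1; rewrite permM; case: (tpermP pos0 pos1 k) => [-> | -> | k0 k1].
- by rewrite tpermL.
- by rewrite tpermD //; neq.
rewrite -[_ == 0%N]/(k == pos0) -[_ == 1%N]/(k == pos1) -[_ == val i]/(k == i).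
rewrite (introF eqP k0) (introF eqP k1).
by case: tpermP => [/k1 | -> | _ /eqP/negPf->]; rewrite ?eqxx.
Qed.

Lemma perm_gminusE i (k : 'I_n) : 1 < i ->
  (if k == 0 :> nat then 1 else if k == 1 :> nat then i : nat
   else if k == i :> nat then 0 else k)%N = (perm_g12 * tperm pos0 i) k :> nat.
Proof.
move=> i1; rewrite permM; case: (tpermP pos0 pos1 k) => [-> | -> | k0 k1].
- by rewrite tpermD //; neq.
- by rewrite tpermL.
rewrite -[_ == 0%N]/(k == pos0) -[_ == 1%N]/(k == pos1) -[_ == val i]/(k == i).
rewrite (introF eqP k0) (introF eqP k1).
by case: tpermP => [/k0 | -> | _ /eqP/negPf->]; rewrite ?eqxx.
Qed.

Lemma splitstar_adjE u v : splitstar_adj u v = (v \in gens :* u).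
Proof.
rewrite /splitstar_adj (word_mkseqE _ _ perm_g12E); apply/idP/idP.
  case/orP=> [/eqP-> | /existsP[i /andP[i1 /orP[]]]].
  - by apply/rcosetP; exists perm_g12; rewrite // -[perm_g12]mulg1 mem_gens ?inE ?eqxx.
  - rewrite (word_mkseqE _ _ (fun k => perm_gplusE k i1)) => /eqP->.
    by apply/rcosetP; exists (perm_g12 * tperm pos1 i); rewrite // mem_gens ?mem_star.
  - rewrite (word_mkseqE _ _ (fun k => perm_gminusE k i1)) => /eqP->.
    by apply/rcosetP; exists (perm_g12 * tperm pos0 i); rewrite // mem_gens ?mem_star.
case/rcosetP=> _ /lcosetP[s sS ->] ->; case/starP: sS => [|c r /centreP[]-> r1].
- by rewrite mulg1 eqxx.
- apply/orP; right; apply/existsP; exists r; rewrite r1 /=.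
  by rewrite (word_mkseqE _ _ (fun k => perm_gminusE k r1)) eqxx orbT.
- apply/orP; right; apply/existsP; exists r; rewrite r1 /=.
  by rewrite (word_mkseqE _ _ (fun k => perm_gplusE k r1)) eqxx.
Qed.

(** * Common neighbours *)

Local Notation C := (common star).

Lemma mem_common_star d s : (s \in C d) = (s \in star) && (d * s^-1 \in star).
Proof. by rewrite /common inE mem_rcoset -[d * _ \in _]star_invE invMg invgK. Qed.

Lemma common_subset d : d \notin gens -> d != 1 ->
  C d \subset [set tperm pos0 (d^-1 pos0); tperm pos1 (d^-1 pos1)].
Proof.
move=> dNg dN1; apply/subsetP => s; rewrite mem_common_star => /andP[sS dsS].
have [σ σS dE] : exists2 σ, σ \in star & d = σ * s by exists (d * s^-1); rewrite ?mulgKV.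
suff [c c1 ->] : exists2 c : 'I_n, c <= 1 & s = tperm c (d^-1 c).
  by move: c1 => /centreP[]->; rewrite !inE eqxx ?orbT.
case/starP: sS dE {dsS} => [|c r c1 r1] dE.
  have dS : d \in star by rewrite dE mulg1.
  have [c c1 dc] := star_fixes_centre dS.
  by exists c; rewrite // -{2}dc permK tperm1.
exists c => //; suff dr : d r = c by rewrite -dr permK.
(* If the cofactor σ also moved r, then d would be 1 or an element g12 * (c' r) of gens. *)
rewrite dE permM; have [->|σr] := eqVneq (σ r) r; first by rewrite tpermR.
have [σr1 σE] := star_moved σS r1 σr; move: σr1 σE; set c' := σ r => c'1 σE.
have [c'c|c'c] := eqVneq c' c; first by move: dN1; rewrite dE σE c'c tperm2 eqxx.
case/negP: dNg; rewrite dE σE tperm_shared ?(tperm_centres c1 c'1); try neq.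
by apply/mem_gens/mem_star.
Qed.

Lemma card_common_le2 d : d \notin gens -> d != 1 -> #|C d| <= 2.
Proof.
move=> dNg dN1; apply: leq_trans (subset_leq_card (common_subset dNg dN1)) _.
by rewrite cards2; case: (_ != _).
Qed.

Lemma common2E d : d \notin gens -> d != 1 -> 1 < #|C d| ->
  C d = [set tperm pos0 (d^-1 pos0); tperm pos1 (d^-1 pos1)].
Proof.
move=> dNg dN1 C2; apply/eqP; rewrite eqEcard common_subset //=.
by apply: leq_trans C2; rewrite cards2; case: (_ != _).
Qed.

Lemma common2_invg d : d \notin gens -> d != 1 -> 1 < #|C d| -> d^-1 = d.
Proof.
move=> dNg dN1 C2; have CE := common2E dNg dN1 C2.
move: CE C2; set α := d^-1 pos0; set β := d^-1 pos1.
set a := tperm pos0 α; set b := tperm pos1 β => CE C2.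
have ab : a != b by move: C2; rewrite CE cards2; case: eqP.
have /[!mem_common_star] /andP[aS daS] : a \in C d by rewrite CE !inE eqxx.
have /[!mem_common_star] /andP[bS dbS] : b \in C d by rewrite CE !inE eqxx orbT.
have α1 : α != pos1 := star_tperm_neq (c' := pos1) aS isT isT isT.
have β0 : β != pos0 := star_tperm_neq (c' := pos0) bS isT isT isT.
have αβ : α != β by rewrite (inj_eq perm_inj).
have dE : d = b * a.
  have [β1|β1] := eqVneq β pos1.
    have dS : d \in star by move: dbS; rewrite /b β1 tperm1 invg1 mulg1.
    have α0 : α != pos0 by apply: contraNneq ab => α0; rewrite /a /b α0 β1 !tperm1.
    have dα : d α != α by rewrite permKV eq_sym.
    have [_ {1}->] := star_moved dS (outer_of_neq α0 α1) dα.
    by rewrite permKV /b β1 tperm1 mul1g.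
  have σβ : (d * a^-1) β = pos1 by rewrite permM permKV /a tpermV tpermD //; neq.
  have σβ' : (d * a^-1) β != β by rewrite σβ eq_sym.
  have [_ σE] := star_moved daS (outer_of_neq β0 β1) σβ'.
  by rewrite -[d](mulgKV a) σE σβ.
rewrite dE invMg /a /b !tpermV; apply: tperm_commute; rewrite tpermD //; neq.
Qed.

Lemma common2_shape d : d \notin gens -> d != 1 -> 1 < #|C d| ->
  [/\ d^-1 = d, d pos0 != pos1, d pos1 != pos0,
      tperm pos0 (d pos0) != tperm pos1 (d pos1) &
      C d = [set tperm pos0 (d pos0); tperm pos1 (d pos1)]].
Proof.
move=> dNg dN1 C2; have dV := common2_invg dNg dN1 C2.
have := common2E dNg dN1 C2; rewrite dV => CE.
have /[!mem_common_star] /andP[aS _] : tperm pos0 (d pos0) \in C d.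
  by rewrite CE !inE eqxx.
have /[!mem_common_star] /andP[bS _] : tperm pos1 (d pos1) \in C d.
  by rewrite CE !inE eqxx orbT.
split=> //; first exact: (@star_tperm_neq pos0).
  exact: (@star_tperm_neq pos1).
by move: C2; rewrite CE cards2; case: eqP.
Qed.

Lemma moved_factor d s z : d z != z -> (d * s^-1) z != z \/ s z != z.
Proof.
move=> dz; have [σz|] := eqVneq ((d * s^-1) z) z; [right | by left].
by rewrite -{1}σz -permM mulgKV.
Qed.

Lemma common_moved3 d s p q r : s \in C d -> 1 < p -> 1 < q -> 1 < r ->
  p != q -> p != r -> q != r -> d p != p -> d q != q -> d r != r -> False.
Proof.
move=> sC p1 q1 r1 pq pr qr dp dq dr.
move: (sC); rewrite mem_common_star => /andP[sS σS].
have uσ := star_moved_uniq σS; have us := star_moved_uniq sS.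
case: (moved_factor s dp) (moved_factor s dq) (moved_factor s dr)
  => [hp|hp] [hq|hq] [hr|hr];
  first [ apply: (negP pq); apply/eqP; solve [exact: uσ | exact: us]
        | apply: (negP pr); apply/eqP; solve [exact: uσ | exact: us]
        | apply: (negP qr); apply/eqP; solve [exact: uσ | exact: us] ].
Qed.

Lemma common_moved2 d s p q c c' : s \in C d -> 1 < p -> 1 < q -> p != q ->
  d p != p -> d q != q -> c <= 1 -> c' <= 1 -> c != c' -> d c != c'.
Proof.
move=> sC p1 q1 pq dp dq c1 c'1 cc'.
move: (sC); rewrite mem_common_star => /andP[sS σS].
suff key (u v : 'I_n) : 1 < u -> 1 < v -> u != v -> (d * s^-1) u != u -> s v != v -> d c != c'.
  case: (moved_factor s dp) (moved_factor s dq) => [hp|hp] [hq|hq].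
  - by case/eqP: pq; apply: star_moved_uniq σS _ _ hp hq.
  - exact: key pq hp hq.
  - by apply: key hq hp; rewrite // eq_sym.
  - by case/eqP: pq; apply: star_moved_uniq sS _ _ hp hq.
move=> u1 v1 uv σu sv; rewrite -[d](mulgKV s) permM.
have [->|->] := star_centre_image σS c1 u1 σu; first exact: star_centre.
have [su|su] := eqVneq (s u) u; first by rewrite su; neq.
by case/eqP: uv; apply: star_moved_uniq sS _ _ su sv.
Qed.

Lemma common_moved4 d s (a1 a2 b1 b2 : 'I_n) : s \in C d ->
  a1 != pos1 -> a2 != pos1 -> b1 != pos0 -> b2 != pos0 ->
  a1 != a2 -> b1 != b2 -> a1 != b1 -> a1 != b2 -> a2 != b1 -> a2 != b2 ->
  (a1 = pos0 \/ a2 = pos0 -> b1 != pos1 /\ b2 != pos1) ->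
  d a1 != a1 -> d a2 != a2 -> d b1 != b1 -> d b2 != b2 -> False.
Proof.
move=> sC a1N1 a2N1 b1N0 b2N0 a12 b12 ab11 ab12 ab21 ab22 centred da1 da2 db1 db2.
have [a10|a10] := eqVneq a1 pos0.
  have [b1N1 b2N1] := centred (or_introl a10).
  have a2N0 : a2 != pos0 by rewrite -a10 eq_sym.
  exact: (common_moved3 sC (outer_of_neq a2N0 a2N1) (outer_of_neq b1N0 b1N1)
                           (outer_of_neq b2N0 b2N1)).
have [a20|a20] := eqVneq a2 pos0.
  have [b1N1 b2N1] := centred (or_intror a20).
  exact: (common_moved3 sC (outer_of_neq a10 a1N1) (outer_of_neq b1N0 b1N1)
                           (outer_of_neq b2N0 b2N1)).
have [b11|b1N1] := eqVneq b1 pos1.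
  have b2N1 : b2 != pos1 by rewrite -b11 eq_sym.
  exact: (common_moved3 sC (outer_of_neq a10 a1N1) (outer_of_neq a20 a2N1)
                           (outer_of_neq b2N0 b2N1)).
exact: (common_moved3 sC (outer_of_neq a10 a1N1) (outer_of_neq a20 a2N1)
                         (outer_of_neq b1N0 b1N1)).
Qed.

Lemma common_moved_pairs d s (a1 a2 b1 b2 : 'I_n) : s \in C d ->
  a1 != pos1 -> a2 != pos1 -> b1 != pos0 -> b2 != pos0 ->
  a1 != a2 -> b1 != b2 -> a1 != b1 -> a2 != b2 ->
  (a1 = pos0 \/ a2 = pos0 -> b1 != pos1 /\ b2 != pos1) ->
  d a1 != a1 -> d a2 != a2 -> d b1 != b1 -> d b2 != b2 ->
  (a2 = b1 -> d pos0 = pos1) -> (b2 = a1 -> d pos1 = pos0) -> False.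
Proof.
move=> sC a1N1 a2N1 b1N0 b2N0 a12 b12 ab11 ab22 centred da1 da2 db1 db2 d0 d1.
have [a2b1|a2b1] := eqVneq a2 b1.
  have b1out : 1 < b1 by apply: outer_of_neq; rewrite // -a2b1.
  have [a10|a10] := eqVneq a1 pos0.
    have b2out : 1 < b2 by rewrite outer_of_neq // (centred (or_introl a10)).2.
    have := @common_moved2 d s b2 b1 pos0 pos1 sC b2out b1out.
    by rewrite d0 // eqxx eq_sym => /(_ b12 db2 db1 isT isT isT).
  have := @common_moved2 d s a1 b1 pos0 pos1 sC (outer_of_neq a10 a1N1) b1out.
  by rewrite d0 // eqxx => /(_ ab11 da1 db1 isT isT isT).
have [b2a1|b2a1] := eqVneq b2 a1.
  have a1out : 1 < a1 by apply: outer_of_neq; rewrite // -b2a1.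
  have [b11|b11] := eqVneq b1 pos1.
    have a20 : a2 != pos0.
      by apply/eqP => a20; case: (centred (or_intror a20)); rewrite b11 eqxx.
    have := @common_moved2 d s a2 a1 pos1 pos0 sC (outer_of_neq a20 a2N1) a1out.
    by rewrite d1 // eqxx eq_sym => /(_ a12 da2 da1 isT isT isT).
  have := @common_moved2 d s a1 b1 pos1 pos0 sC a1out (outer_of_neq b1N0 b11).
  by rewrite d1 // eqxx => /(_ ab11 da1 db1 isT isT isT).
by apply: (common_moved4 sC) centred da1 da2 db1 db2; rewrite // eq_sym.
Qed.

Lemma common2_triangle d1 d2 :
  d1 \notin gens -> d1 != 1 -> 1 < #|C d1| ->
  d2 \notin gens -> d2 != 1 -> 1 < #|C d2| ->
  C (d2 * d1^-1) != set0 -> C d1 :&: C d2 != set0.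
Proof.
move=> d1Ng d1N1 C1 d2Ng d2N1 C2 /set0Pn[s sC].
have [inv1 α1N1 β1N0 ab1 CE1] := common2_shape d1Ng d1N1 C1.
have [inv2 α2N1 β2N0 ab2 CE2] := common2_shape d2Ng d2N1 C2.
have dd1 z : d1 (d1 z) = z by rewrite -{1}inv1 permK.
have dd2 z : d2 (d2 z) = z by rewrite -{1}inv2 permK.
move: α1N1 β1N0 ab1 CE1 α2N1 β2N0 ab2 CE2.
set α1 := d1 pos0; set β1 := d1 pos1; set α2 := d2 pos0; set β2 := d2 pos1.
move=> α1N1 β1N0 ab1 CE1 α2N1 β2N0 ab2 CE2; apply/set0Pn; rewrite CE1 CE2.
have [α12|α12] := eqVneq α1 α2; first by exists (tperm pos0 α1); rewrite !inE α12 eqxx.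
have [β12|β12] := eqVneq β1 β2; first by exists (tperm pos1 β1); rewrite !inE β12 eqxx !orbT.
have [a1b2|a1b2] := eqVneq (tperm pos0 α1) (tperm pos1 β2).
  by exists (tperm pos0 α1); rewrite !inE a1b2 eqxx !orbT.
have [b1a2|b1a2] := eqVneq (tperm pos1 β1) (tperm pos0 α2).
  by exists (tperm pos1 β1); rewrite !inE b1a2 eqxx !orbT.
exfalso; set e := d2 * d1^-1 in sC.
have moved z : (e z != z) = (d2 z != d1 z).
  by rewrite permM -(inj_eq (@perm_inj _ d1)) permKV.
apply: (common_moved_pairs sC α1N1 α2N1 β1N0 β2N0 α12 β12).
- by rewrite (inj_eq perm_inj).
- by rewrite (inj_eq perm_inj).
- case=> α0; split;
    [apply: contraNneq ab1 | apply: contraNneq a1b2 | apply: contraNneq b1a2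
    | apply: contraNneq ab2] => β; by rewrite α0 β !tperm1.
- by rewrite moved dd1; apply: contraNneq α12 => h; rewrite /α2 -h dd2.
- by rewrite moved dd2 eq_sym; apply: contraNneq α12 => h; rewrite /α1 -h dd1.
- by rewrite moved dd1; apply: contraNneq β12 => h; rewrite /β2 -h dd2.
- by rewrite moved dd2 eq_sym; apply: contraNneq β12 => h; rewrite /β1 -h dd1.
- by move=> α2β1; rewrite permM inv1 -/α2 α2β1 dd1.
- by move=> β2α1; rewrite permM inv1 -/β2 β2α1 dd1.
Qed.

Definition centre_kind s : option bool :=
  if s pos0 != pos0 then Some false else if s pos1 != pos1 then Some true else None.

Lemma centre_kind_tperm c r : c <= 1 -> 1 < r -> centre_kind (tperm c r) = Some (c == pos1).
Proof.
move=> /centreP[]-> r1; rewrite /centre_kind tpermL.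
  by rewrite ifT //; neq.
by rewrite tpermD ?eqxx ?ifT //; neq.
Qed.

Lemma card_common_same_kind x y : x \in star -> y \in star -> x != y ->
  centre_kind x = centre_kind y -> #|C (y * x^-1)| <= 1.
Proof.
case/starP=> [|c r c1 r1]; case/starP=> [|c' r' c'1 r'1] //;
  rewrite ?eqxx ?centre_kind_tperm /centre_kind ?perm1 ?eqxx //.
move=> rr' [cc']; have c'c : c' = c.
  by move: c1 c'1 cc' => /centreP[]-> /centreP[]->.
rewrite {c'1 cc'}c'c in rr' *.
have {}rr' : r != r' by apply: contraNneq rr' => ->.
set d := _ * _; have dr' : d r' = r by rewrite permM tpermR tpermV tpermL.
have dr : d r = c by rewrite permM tpermD ?tpermV ?tpermR //; neq.
have [c'' c''1 cc''] : exists2 c'' : 'I_n, c'' <= 1 & c != c''.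
  by case/centreP: c1 => ->; [exists pos1 | exists pos0].
have dNg : d \notin gens.
  apply/negP => gG; have := gens_moves_centre gG c''1.
  by rewrite /d permM tpermV !tpermD ?eqxx //; neq.
have dN1 : d != 1 by apply: contraNneq rr' => d1; move: dr'; rewrite d1 perm1 => ->.
rewrite leqNgt; apply/negP => C2.
have : d^-1 (d r') = r' by rewrite permK.
by rewrite (common2_invg dNg dN1 C2) dr' dr => cr'; move: c1; rewrite cr' leqNgt r'1.
Qed.

Lemma star_clique_card A : A \subset star ->
  {in A &, forall x y, x != y -> 1 < #|C (y * x^-1)|} -> #|A| <= 3.
Proof.
move=> /subsetP AS clique; rewrite -(card_in_imset (f := centre_kind)).
  by apply: leq_trans (max_card _) _; rewrite card_option card_bool.
move=> x y xA yA kxy; apply/eqP; apply: contraT => xy.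
have := clique x y xA yA xy.
by rewrite ltnNge (card_common_same_kind (AS x xA) (AS y yA) xy kxy).
Qed.

(** * Independent sets *)

Definition ball u : {set P} := star :* u.

Lemma card_ball u : #|ball u| = (2 * m).+1.
Proof. by rewrite /ball card_rcoset card_star. Qed.

Lemma mem_gens_rcoset u v : (v \in gens :* u) = (perm_g12 * v \in ball u).
Proof. by rewrite /ball !mem_rcoset mem_lcoset /perm_g12 tpermV mulgA. Qed.

Lemma independentP S : independent S -> {in S &, forall u v, ~~ splitstar_adj u v}.
Proof. by move/forall_inP=> indS u v uS vS; exact: (forall_inP (indS u uS) v vS). Qed.

Lemma nbhd_independent S : independent S -> nbhd S = perm_g12 *: \bigcup_(u in S) ball u.
Proof.
move=> /independentP indS; apply/setP => v; rewrite mem_lcoset /perm_g12 tpermV -/perm_g12.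
rewrite inE; apply/andP/bigcupP => [[_ /exists_inP[u uS]] | [u uS]].
  by rewrite splitstar_adjE mem_gens_rcoset; exists u.
rewrite -mem_gens_rcoset -splitstar_adjE => uv; split; last by apply/exists_inP; exists u.
by apply/negP => vS; move: (indS u v uS vS); rewrite uv.
Qed.

Lemma card_nbhd_independent S : independent S -> #|nbhd S| = #|\bigcup_(u in S) ball u|.
Proof. by move=> indS; rewrite nbhd_independent // card_lcoset. Qed.

Lemma independent_notin_gens S u v : independent S -> u \in S -> v \in S ->
  v * u^-1 \notin gens.
Proof. by move=> /independentP indS uS vS; rewrite -mem_rcoset -splitstar_adjE indS. Qed.

Lemma ball_clique_card S w : {in S &, forall u v, u != v -> 1 < #|ball u :&: ball v|} ->
  {in S, forall u, w \in ball u} -> #|S| <= 3.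
Proof.
rewrite /ball; apply: card_common_clique => [g|]; first by rewrite star_invE.
exact: star_clique_card.
Qed.

Section IndependentSet.
Variables (S : {set P}) (indS : independent S).

Lemma card_ballI_le2 u v : u \in S -> v \in S -> u != v -> #|ball u :&: ball v| <= 2.
Proof.
move=> uS vS uv; rewrite /ball card_rcosetI card_common_le2 ?(independent_notin_gens indS) //.
by rewrite -eq_mulgV1 eq_sym.
Qed.

Lemma ballI3_gt0 u v x : u \in S -> v \in S -> x \in S -> u != v -> u != x -> v != x ->
  1 < #|ball u :&: ball v| -> 1 < #|ball u :&: ball x| -> 0 < #|ball v :&: ball x| ->
  0 < #|ball u :&: ball v :&: ball x|.
Proof.
move=> uS vS xS uv ux vx; rewrite /ball !card_rcosetI card_rcosetI3 !card_gt0 => Cv Cx Cvx.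
have notin_gens := independent_notin_gens indS.
have neq1 (y z : P) : y != z -> z * y^-1 != 1 by rewrite -eq_mulgV1 eq_sym.
by apply: common2_triangle; rewrite ?mulgV_shift ?notin_gens ?neq1.
Qed.

Lemma ballI3_sum_gt0 u v x : u \in S -> v \in S -> x \in S -> u != v -> u != x -> v != x ->
  4 < #|ball u :&: ball v| + #|ball u :&: ball x| + #|ball v :&: ball x| ->
  0 < #|ball u :&: ball v :&: ball x|.
Proof.
move=> uS vS xS uv ux vx.
move/(sum3_gt4_cases (card_ballI_le2 uS vS uv) (card_ballI_le2 uS xS ux)
                     (card_ballI_le2 vS xS vx)) => /or3P[] /and3P[C1 C2 C3].
- exact: ballI3_gt0.
- rewrite (setIC (ball u)).
  by apply: ballI3_gt0 => //; first [rewrite eq_sym | rewrite setIC].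
- rewrite setIC setIA.
  by apply: ballI3_gt0 => //; first [rewrite eq_sym | rewrite setIC].
Qed.

Lemma nbhd_card2 : #|S| = 2 -> (4 * n - 8 <= #|nbhd S|)%N.
Proof.
move=> /eqP/cards2P[a [b [ab SE]]].
have aS : a \in S by rewrite SE !inE eqxx.
have bS : b \in S by rewrite SE !inE eqxx orbT.
rewrite card_nbhd_independent // SE bigcup_setU !big_set1.
have := cardsUI (ball a) (ball b); rewrite !card_ball.
have := card_ballI_le2 aS bS ab; lia.
Qed.

Lemma nbhd_card3 : #|S| = 3 -> (6 * n - 14 <= #|nbhd S|)%N.
Proof.
move=> /card3_set[a [b [c [ab ac bc SE]]]].
have aS : a \in S by rewrite SE !inE eqxx.
have bS : b \in S by rewrite SE !inE eqxx !orbT.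
have cS : c \in S by rewrite SE !inE eqxx !orbT.
rewrite card_nbhd_independent // SE !bigcup_setU !big_set1.
have := cardsUI3 (ball a) (ball b) (ball c); rewrite !card_ball.
have := card_ballI_le2 aS bS ab; have := card_ballI_le2 aS cS ac.
have := card_ballI_le2 bS cS bc; have := ballI3_sum_gt0 aS bS cS ab ac bc; lia.
Qed.

Lemma nbhd_card4 : #|S| = 4 -> (8 * n - 20 <= #|nbhd S|)%N.
Proof.
move=> S4; have [a [b [c [d [/and3P[ab ac ad] /and3P[bc bd cd] SE]]]]] := card4_set S4.
have aS : a \in S by rewrite SE !inE eqxx.
have bS : b \in S by rewrite SE !inE eqxx !orbT.
have cS : c \in S by rewrite SE !inE eqxx !orbT.
have dS : d \in S by rewrite SE !inE eqxx !orbT.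
have clique : 0 < #|ball a :&: ball b :&: ball c :&: ball d| ->
    ~~ [&& 1 < #|ball a :&: ball b|, 1 < #|ball a :&: ball c|, 1 < #|ball a :&: ball d|,
           1 < #|ball b :&: ball c|, 1 < #|ball b :&: ball d| & 1 < #|ball c :&: ball d|].
  case/card_gt0P => w /setIP[/setIP[/setIP[wa wb] wc] wd].
  apply/negP => /andP[Cab /and5P[Cac Cad Cbc Cbd Ccd]].
  suff : #|S| <= 3 by rewrite S4.
  apply: (ball_clique_card (w := w)) => [u v | u]; rewrite SE !inE -!orbA.
    by case/or4P=> /eqP-> /or4P[]/eqP->; rewrite ?eqxx // => _; rewrite // setIC.
  by case/or4P=> /eqP->.
rewrite card_nbhd_independent // SE !bigcup_setU !big_set1.
have [q1 q2 q3 q4] := card_setI4_le (ball a) (ball b) (ball c) (ball d).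
have := union4_count (cardsUI4 (ball a) (ball b) (ball c) (ball d))
  (card_ballI_le2 aS bS ab) (card_ballI_le2 aS cS ac) (card_ballI_le2 aS dS ad)
  (card_ballI_le2 bS cS bc) (card_ballI_le2 bS dS bd) (card_ballI_le2 cS dS cd)
  (ballI3_sum_gt0 aS bS cS ab ac bc) (ballI3_sum_gt0 aS bS dS ab ad bd)
  (ballI3_sum_gt0 aS cS dS ac ad cd) (ballI3_sum_gt0 bS cS dS bc bd cd) q1 q2 q3 q4 clique.
by rewrite !card_ball => bound; clear -bound; lia.
Qed.

End IndependentSet.

End Star.

(* The bounds hold for every n >= 2; the hypothesis 4 <= n only rules out n < 2. *)
Theorem lemma11 (n : nat) (S : {set {perm 'I_n}}) :
  4 <= n -> independent S ->
  [/\ #|S| = 2 -> 4 * n - 8 <= #|nbhd S|,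
      #|S| = 3 -> 6 * n - 14 <= #|nbhd S|
    & #|S| = 4 -> 8 * n - 20 <= #|nbhd S|].
Proof.
case: n S => [|[|m]] S // _ indS.
by split; [exact: nbhd_card2 | exact: nbhd_card3 | exact: nbhd_card4].
Qed.
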